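(* Let $\Psi$ be a root system in a real inner product space, with base $\{\gamma_1,\dots,\gamma_m\}$ and positive roots $\Psi^+$, and let $\mathfrak{s}^+=\{H\in\operatorname{span}\Psi:(H,\gamma_i)>0 \text{ for all } i=1,\dots,m\}$. Let $\Psi_1=\operatorname{span}_{\mathbb{Z}}\{\gamma_2,\dots,\gamma_m\}\cap\Psi$, with Weyl group $\mathcal{V}_1$ (generated by the reflections $\sigma_\alpha(v)=v-\frac{2(v,\alpha)}{(\alpha,\alpha)}\alpha$, $\alpha\in\Psi_1$), and let $\mathfrak{c}^+=\{H\in\operatorname{span}\Psi_1:(H,\gamma_i)>0\text{ for } i=2,\dots,m\}$. Let $$R_1=\{H\in\mathfrak{s}^+:\|H\|\ge1,\ (\gamma_1,H)\ge(\gamma_j,H)\text{ for all } j\},$$ and define $P:\operatorname{span}\Psi\to\operatorname{span}\Psi$ by $P(H)=\frac{1}{|\mathcal{V}_1|}\sum_{\sigma\in\mathcal{V}_1}\sigma(H)$. Then: (i) $\sigma(P(H))=P(H)$ for all $\sigma\in\mathcal{V}_1$ and $H\in\operatorname{span}\Psi$; (ii) $P$ is the orthogonal projection from $\operatorname{span}\Psi$ onto $(\operatorname{span}\Psi_1)^\perp$, so $I-P$ is the orthogonal projection from $\operatorname{span}\Psi$ onto $\operatorname{span}\Psi_1$; (iii) $I-P$ maps $\mathfrak{s}^+$ into $\mathfrak{c}^+$; (iv) there are constants $a,b>0$ such that $\|P(H)\|\ge a\|H\|$ and $\|(I-P)H\|\le b\|P(H)\|$ for all $H\in R_1$.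
   Context: In the paper $\Psi$ arises as a simple subroot system of an irreducible root system $\Phi$ with base $\Delta$, i.e. $\Psi=\operatorname{span}_{\mathbb{Z}}\{\gamma_1,\dots,\gamma_m\}\cap\Phi$ for some subset $\{\gamma_1,\dots,\gamma_m\}\subseteq\Delta$, which is then a base of $\Psi$. *)

From HB Require Import structures.
From mathcomp Require Import all_boot all_order all_algebra.
From mathcomp Require Import boolp reals.
From Stdlib Require Import ClassicalEpsilon.
Set Implicit Arguments. Unset Strict Implicit. Unset Printing Implicit Defensive.
Import Order.TTheory GRing.Theory Num.Theory.
Local Open Scope ring_scope.

Section RootDefs.
Variables (R : realType) (d : nat).
Local Notation V := 'rV[R]_d.

Definition dotp (u v : V) : R := (u *m v^T) 0 0.
Definition vnorm (u : V) : R := Num.sqrt (dotp u u).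

(** The reflection sigma_a (v) = v - 2 (v,a)/(a,a) a, as a map and as the
    matrix acting on row vectors on the right. *)
Definition refl (a v : V) : V := v - (2 * dotp v a / dotp a a) *: a.
Definition reflmx (a : V) : 'M[R]_d :=
  1%:M - (2 / dotp a a) *: (a^T *m a).

(** A (finite, reduced, crystallographic) root system, given by the finite
    list of its roots. *)
Definition root_system (Psi : seq V) : Prop :=
  [/\ uniq Psi, (0 : V) \notin Psi,
      (forall a b, a \in Psi -> b \in Psi -> refl a b \in Psi),
      (forall a b, a \in Psi -> b \in Psi ->
          exists z : int, 2 * dotp b a / dotp a a = z%:~R)
    & (forall a (c : R), a \in Psi -> c *: a \in Psi -> c = 1 \/ c = -1)].

Definition base_of (Psi : seq V) (k : nat) (gam : 'I_k -> V) : Prop :=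
  [/\ (forall i, gam i \in Psi),
      (forall c : 'I_k -> R, \sum_i c i *: gam i = 0 -> forall i, c i = 0)
    & (forall b, b \in Psi -> exists c : 'I_k -> int,
          b = \sum_i (c i)%:~R *: gam i /\
          ((forall i, (0 <= c i)%R) \/ (forall i, (c i <= 0)%R)))].

(** Psi_1 = span_Z {gam_2, ..., gam_m} \cap Psi (gam_1 is gam ord0). *)
Definition subroots (Psi : seq V) (m : nat) (gam : 'I_m.+1 -> V) : seq V :=
  [seq b <- Psi | `[< exists c : 'I_m.+1 -> int,
        c ord0 = 0 /\ b = \sum_i (c i)%:~R *: gam i >]].

Definition in_weyl (S : seq V) (M : 'M[R]_d) : Prop :=
  exists l : seq V, all (mem S) l /\ M = foldr (fun a N => reflmx a *m N) 1%:M l.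

(** A duplicate-free enumeration of the Weyl group (chosen classically;
    the Weyl group is finite, so such an enumeration exists). *)
Definition weyl_enum (S : seq V) : seq 'M[R]_d :=
  epsilon (inhabits [::])
    (fun s => uniq s /\ forall M, M \in s <-> in_weyl S M).

Definition avgP (S : seq V) (H : V) : V :=
  (size (weyl_enum S))%:R^-1 *: \sum_(M <- weyl_enum S) (H *m M).

Definition orth_proj (D W : V -> Prop) (f : V -> V) : Prop :=
  forall H, D H -> W (f H) /\ forall w, W w -> dotp (H - f H) w = 0.

End RootDefs.

From HB Require Import structures.
From mathcomp Require Import all_boot all_order all_algebra.
From mathcomp Require Import boolp reals.
From Stdlib Require Import ClassicalEpsilon.
From mathcomp Require Import ring lra zify.
Set Implicit Arguments. Unset Strict Implicit. Unset Printing Implicit Defensive.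
Import Order.TTheory GRing.Theory Num.Theory.
Local Open Scope ring_scope.

(* The average P(H) is fixed by every reflection in Psi_1, hence orthogonal to
   Psi_1, while H - P(H) is an average of the vectors H - sigma(H), which lie in
   span Psi_1.  So P is the orthogonal projection onto the orthogonal complement
   of span Psi_1 in span Psi, i.e. onto the line of the fundamental weight
   omega_1 dual to gamma_1.  Simple roots are pairwise obtuse, so the inverse
   Gram matrix of the base is entrywise nonnegative: the fundamental weights
   have pairwise nonnegative inner products.  Writing
   H = sum_i (H, gamma_i) omega_i with 0 < (H, gamma_i) <= (H, gamma_1) then
   bounds |H|^2 above by (H, gamma_1)^2 sum_ij (omega_i, omega_j) and
   (H, omega_1) = (P(H), omega_1) below by (H, gamma_1) |omega_1|^2, which
   yields (iv). *)

Lemma sumr_mul_delta (R : pzSemiRingType) (I : finType) (F : I -> R) k :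
  \sum_i F i * (i == k)%:R = F k.
Proof.
rewrite (bigD1 k) //= eqxx mulr1 big1 ?addr0 // => i /negbTE->.
by rewrite mulr0.
Qed.

Section InnerProduct.
Variables (R : realType) (d : nat).
Local Notation V := 'rV[R]_d.
Implicit Types u v w : V.

Lemma dotpE u v : dotp u v = \sum_i u 0 i * v 0 i.
Proof. by rewrite /dotp !mxE; apply: eq_bigr => i _; rewrite mxE. Qed.

Lemma dotpC u v : dotp u v = dotp v u.
Proof. by rewrite !dotpE; apply: eq_bigr => i _; rewrite mulrC. Qed.

Lemma dotpDl u v w : dotp (u + v) w = dotp u w + dotp v w.
Proof. by rewrite !dotpE -big_split; apply: eq_bigr => i _; rewrite !mxE mulrDl. Qed.

Lemma dotpZl (c : R) u w : dotp (c *: u) w = c * dotp u w.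
Proof. by rewrite !dotpE mulr_sumr; apply: eq_bigr => i _; rewrite !mxE mulrA. Qed.

Lemma dotpNl u w : dotp (- u) w = - dotp u w.
Proof. by rewrite -scaleN1r dotpZl mulN1r. Qed.

Lemma dotpBl u v w : dotp (u - v) w = dotp u w - dotp v w.
Proof. by rewrite dotpDl dotpNl. Qed.

Lemma dotp0l w : dotp 0 w = 0.
Proof. by rewrite -(scale0r 0) dotpZl mul0r. Qed.

Lemma dotp_suml (I : Type) (r : seq I) (P : pred I) (F : I -> V) w :
  dotp (\sum_(i <- r | P i) F i) w = \sum_(i <- r | P i) dotp (F i) w.
Proof. by elim/big_rec2: _ => [|i y1 y2 _ <-]; rewrite ?dotp0l ?dotpDl. Qed.

Lemma dotpDr u v w : dotp w (u + v) = dotp w u + dotp w v.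
Proof. by rewrite dotpC dotpDl !(dotpC w). Qed.

Lemma dotpZr (c : R) u w : dotp w (c *: u) = c * dotp w u.
Proof. by rewrite dotpC dotpZl dotpC. Qed.

Lemma dotpNr u w : dotp w (- u) = - dotp w u.
Proof. by rewrite dotpC dotpNl dotpC. Qed.

Lemma dotpBr u v w : dotp w (u - v) = dotp w u - dotp w v.
Proof. by rewrite dotpDr dotpNr. Qed.

Lemma dotp0r w : dotp w 0 = 0.
Proof. by rewrite dotpC dotp0l. Qed.

Lemma dotp_sumr (I : Type) (r : seq I) (P : pred I) (F : I -> V) w :
  dotp w (\sum_(i <- r | P i) F i) = \sum_(i <- r | P i) dotp w (F i).
Proof. by rewrite dotpC dotp_suml; apply: eq_bigr => i _; rewrite dotpC. Qed.

Lemma dotpp_ge0 u : 0 <= dotp u u.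
Proof. by rewrite dotpE; apply: sumr_ge0 => i _; rewrite -expr2 sqr_ge0. Qed.

Lemma dotpp_eq0 u : dotp u u = 0 -> u = 0.
Proof.
rewrite dotpE => u0; apply/rowP => i; rewrite mxE.
have sq_ge0 (j : 'I_d) : predT j -> 0 <= u 0 j * u 0 j.
  by rewrite -expr2 sqr_ge0.
have /eqP := @psumr_eq0P _ _ predT _ sq_ge0 u0 i isT.
by rewrite mulf_eq0 orbb => /eqP.
Qed.

Lemma dotpp_gt0 u : u != 0 -> 0 < dotp u u.
Proof.
move=> u_nz; rewrite lt_def dotpp_ge0 andbT.
by apply: contra u_nz => /eqP/dotpp_eq0->.
Qed.

Lemma dotp_span_eq0 (X : seq V) v u :
  (forall a, a \in X -> dotp v a = 0) -> u \in <<X>>%VS -> dotp v u = 0.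
Proof.
move=> vX uX; rewrite (coord_span (X := in_tuple X) uX) dotp_sumr.
by apply: big1 => i _; rewrite dotpZr vX ?mulr0 // mem_nth.
Qed.

Lemma dotp_CauchySchwarz u w : dotp u w ^+ 2 <= dotp u u * dotp w w.
Proof.
have [->|w_nz] := eqVneq w 0; first by rewrite !dotp0r expr0n mulr0.
have ww_gt0 := dotpp_gt0 w_nz.
pose t := dotp u w / dotp w w.
have expand : dotp (u - t *: w) (u - t *: w) = dotp u u - dotp u w ^+ 2 / dotp w w.
  rewrite !dotpBl !dotpBr !dotpZl !dotpZr (dotpC w u) /t.
  by field; rewrite gt_eqF.
by have := dotpp_ge0 (u - t *: w); rewrite expand subr_ge0 ler_pdivrMr.
Qed.

Lemma dotpp_subr_orth u v :
  dotp v (u - v) = 0 -> dotp (u - v) (u - v) = dotp u u - dotp v v.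
Proof.
move=> orth; rewrite dotpBl orth subr0 dotpBr (dotpC u v).
by move/eqP: orth; rewrite dotpBr subr_eq0 => /eqP->.
Qed.

Lemma sqrt_mul_vnorm_le (k : R) u v :
  0 <= k -> k * dotp u u <= dotp v v -> Num.sqrt k * vnorm u <= vnorm v.
Proof. by move=> k_ge0 le_uv; rewrite /vnorm -sqrtrM // ler_wsqrtr. Qed.

Lemma vnorm_le_sqrt_mul (k : R) u v :
  0 <= k -> dotp u u <= k * dotp v v -> vnorm u <= Num.sqrt k * vnorm v.
Proof. by move=> k_ge0 le_uv; rewrite /vnorm -sqrtrM // ler_wsqrtr. Qed.

End InnerProduct.

Section Reflection.
Variables (R : realType) (d : nat).
Local Notation V := 'rV[R]_d.
Implicit Types a x y : V.

Lemma mul_reflmx a x : x *m reflmx a = refl a x.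
Proof.
have mx11 (B : 'M[R]_1) : B *m a = B 0 0 *: a.
  by apply/rowP => j; rewrite !mxE big_ord1.
rewrite /reflmx /refl mulmxBr mulmx1 -scalemxAr mulmxA mx11.
by rewrite scalerA /dotp mulrAC.
Qed.

Lemma dotp_refl_root a x : a != 0 -> dotp (refl a x) a = - dotp x a.
Proof.
move=> a_nz; have aa_gt0 := dotpp_gt0 a_nz.
by rewrite /refl dotpBl dotpZl; field; rewrite gt_eqF.
Qed.

Lemma reflK a : a != 0 -> involutive (refl a).
Proof.
move=> a_nz x; rewrite {1}/refl dotp_refl_root // mulrN mulNr scaleNr opprK.
by rewrite /refl subrK.
Qed.

Lemma dotp_refl a x y : a != 0 -> dotp (refl a x) (refl a y) = dotp x y.
Proof.
move=> a_nz; have aa_gt0 := dotpp_gt0 a_nz.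
rewrite /refl !dotpBl !dotpBr !dotpZl !dotpZr (dotpC a y).
by field; rewrite gt_eqF.
Qed.

Lemma refl_id a x : dotp x a = 0 -> refl a x = x.
Proof. by move=> xa; rewrite /refl xa mulr0 mul0r scale0r subr0. Qed.

Lemma reflmxK a : a != 0 -> reflmx a *m reflmx a = 1%:M.
Proof.
move=> a_nz; apply/eqP/mulmxP => x.
by rewrite mulmxA !mul_reflmx reflK // mulmx1.
Qed.

End Reflection.

Section WeylGroup.
Variables (R : realType) (d : nat).
Local Notation V := 'rV[R]_d.
Implicit Types a x H : V.

Definition reflprod (l : seq V) : 'M[R]_d := foldr (fun a N => reflmx a *m N) 1%:M l.
Definition reflseq (l : seq V) x : V := foldl (fun x a => refl a x) x l.

Lemma mul_reflprod l x : x *m reflprod l = reflseq l x.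
Proof.
elim: l x => [|a l IHl] x /=; first by rewrite mulmx1.
by rewrite mulmxA mul_reflmx IHl.
Qed.

Lemma reflprod_cat l1 l2 : reflprod (l1 ++ l2) = reflprod l1 *m reflprod l2.
Proof. by elim: l1 => [|a l IHl] /=; rewrite ?mul1mx // IHl mulmxA. Qed.

Variable S : seq V.
Hypothesis S_neq0 : forall a, a \in S -> a != 0.
Hypothesis S_refl : forall a b, a \in S -> b \in S -> refl a b \in S.

Lemma in_weylP M : in_weyl S M -> exists2 l, all (mem S) l & M = reflprod l.
Proof. by case=> l []; exists l. Qed.

Lemma reflprod_rev l : all (mem S) l -> reflprod l *m reflprod (rev l) = 1%:M.
Proof.
elim: l => [|a l IHl] /=; first by rewrite mulmx1.
case/andP=> aS lS; rewrite rev_cons -cats1 reflprod_cat /= mulmx1.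
by rewrite -!mulmxA (mulmxA (reflprod l)) IHl // mul1mx reflmxK ?S_neq0.
Qed.

Lemma reflseq_id l x :
  all (mem S) l -> (forall a, a \in S -> dotp x a = 0) -> reflseq l x = x.
Proof.
elim: l x => [|a l IHl] x //= /andP[aS lS] xS.
by rewrite refl_id ?xS // IHl.
Qed.

Lemma reflseq_subr_span l x : all (mem S) l -> reflseq l x - x \in <<S>>%VS.
Proof.
elim: l x => [|a l IHl] x /=; first by rewrite subrr mem0v.
case/andP=> aS lS; rewrite -(subrK (refl a x) (reflseq _ _)) -addrA memvD ?IHl //.
by rewrite /refl addrAC subrr add0r memvN memvZ // memv_span.
Qed.

Lemma dotp_reflseq l x y : all (mem S) l -> dotp (reflseq l x) (reflseq l y) = dotp x y.
Proof.
elim: l x y => [|a l IHl] x y //= /andP[aS lS].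
by rewrite IHl // dotp_refl ?S_neq0.
Qed.

Lemma reflseq_mem l b : all (mem S) l -> b \in S -> reflseq l b \in S.
Proof.
elim: l b => [|a l IHl] b //= /andP[aS lS] bS.
by rewrite IHl // S_refl.
Qed.

Lemma weyl_eq M N : in_weyl S M -> in_weyl S N ->
  (forall a, a \in S -> a *m M = a *m N) -> M = N.
Proof.
case/in_weylP=> l lS ->; case/in_weylP=> l' l'S -> eqMN.
apply/eqP/mulmxP => x; pose w := x *m reflprod l - x *m reflprod l'.
have wS : w \in <<S>>%VS.
  have -> : w = (x *m reflprod l - x) - (x *m reflprod l' - x).
    by rewrite opprB addrA subrK.
  by rewrite memvB // mul_reflprod reflseq_subr_span.
have w_orth b : b \in S -> dotp w b = 0.
  move=> bS; pose a := b *m reflprod (rev l').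
  have aS : a \in S by rewrite /a mul_reflprod reflseq_mem // all_rev.
  have <- : a *m reflprod l' = b.
    by rewrite /a -mulmxA -{2}(revK l') reflprod_rev ?all_rev ?mulmx1.
  by rewrite /w dotpBl -{1}(eqMN a aS) !mul_reflprod !dotp_reflseq // subrr.
by apply/eqP; rewrite -subr_eq0; apply/eqP/dotpp_eq0; apply: dotp_span_eq0 wS.
Qed.

(* An element of the Weyl group permutes S, and is determined by the induced
   map on the indices of S: there are only finitely many such maps. *)
Lemma weyl_finite :
  exists s : seq 'M[R]_d, uniq s /\ forall M, M \in s <-> in_weyl S M.
Proof.
pose n := size S.
pose induces (f : {ffun 'I_n -> 'I_n}) M :=
  in_weyl S M /\ forall i : 'I_n, S`_i *m M = S`_(f i).
pose pick f := epsilon (inhabits 1%:M) (induces f).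
exists (undup [seq M <- [seq pick f | f <- enum {: {ffun 'I_n -> 'I_n}}] |
                `[< in_weyl S M >]]).
split=> [|M]; first exact: undup_uniq.
rewrite mem_undup mem_filter; split=> [/andP[/asboolP] //|WM].
apply/andP; split; first exact/asboolP.
have [l lS EM] := in_weylP WM.
have index_lt (i : 'I_n) : (index (S`_i *m M) S < n)%N.
  by rewrite index_mem EM mul_reflprod reflseq_mem // mem_nth.
pose f := [ffun i => Ordinal (index_lt i)].
have fM : induces f M.
  by split=> // i; rewrite ffunE /= nth_index // -index_mem.
have := epsilon_spec (inhabits 1%:M) (induces f) (ex_intro _ M fM).
rewrite -/(pick f) => -[Wpick pickf].
suff -> : M = pick f by apply: map_f; rewrite mem_enum.
apply: weyl_eq => // a aS; have ai : (index a S < n)%N by rewrite index_mem.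
have [_ /(_ (Ordinal ai))] := fM; have := pickf (Ordinal ai).
by rewrite /= nth_index // => -> ->.
Qed.

Lemma weyl_enumP : uniq (weyl_enum S) /\ forall M, M \in weyl_enum S <-> in_weyl S M.
Proof. exact: epsilon_spec weyl_finite. Qed.

Lemma weyl_mulmx_refl M a : in_weyl S M -> a \in S -> in_weyl S (M *m reflmx a).
Proof.
case/in_weylP=> l lS -> aS; exists (l ++ [:: a]).
by rewrite all_cat lS /= aS -/(reflprod (l ++ [:: a])) reflprod_cat /= mulmx1.
Qed.

Lemma size_weyl_enum_gt0 : (0 < size (weyl_enum S))%N.
Proof.
have [_ /(_ 1%:M)[_ one_in]] := weyl_enumP.
have : 1%:M \in weyl_enum S by apply: one_in; exists [::].
by case: (weyl_enum S).
Qed.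

Lemma avgP_subr_span H : H - avgP S H \in <<S>>%VS.
Proof.
set s := weyl_enum S; have s_nz : (size s)%:R != 0 :> R.
  by rewrite pnatr_eq0 -lt0n size_weyl_enum_gt0.
have avgH : H = (size s)%:R^-1 *: \sum_(M <- s) H.
  by rewrite big_const_seq count_predT iter_addr_0 -scaler_nat scalerA mulVf ?scale1r.
rewrite {1}avgH /avgP -/s -scalerBr -sumrB big_seq memvZ // memv_suml // => M Ms.
have [l lS ->] := in_weylP ((weyl_enumP.2 M).1 Ms).
by rewrite -opprB memvN mul_reflprod reflseq_subr_span.
Qed.

(* Right multiplication by reflmx a permutes the Weyl group. *)
Lemma avgP_reflmx H a : a \in S -> avgP S H *m reflmx a = avgP S H.
Proof.
move=> aS; rewrite /avgP -scalemxAl mulmx_suml; congr (_ *: _).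
pose f (M : 'M[R]_d) := M *m reflmx a.
have fK : involutive f by move=> M; rewrite /f -mulmxA reflmxK ?S_neq0 ?mulmx1.
have [s_uniq memsP] := weyl_enumP.
transitivity (\sum_(M <- [seq f M | M <- weyl_enum S]) H *m M).
  by rewrite big_map; apply: eq_bigr => M _; rewrite mulmxA.
apply/perm_big/uniq_perm => //; first by rewrite map_inj_uniq //; exact: inv_inj.
move=> M; rewrite -{1}(fK M) mem_map; last exact: inv_inj.
apply/idP/idP => /memsP WM; apply/memsP; last exact: weyl_mulmx_refl.
by rewrite -(fK M); apply: weyl_mulmx_refl.
Qed.

Lemma avgP_orth H a : a \in S -> dotp (avgP S H) a = 0.
Proof.
move=> aS; have aa_gt0 := dotpp_gt0 (S_neq0 aS).
have /eqP := avgP_reflmx H aS; rewrite mul_reflmx /refl.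
rewrite subr_eq addrC -subr_eq subrr eq_sym scaler_eq0 (negbTE (S_neq0 aS)) orbF.
by rewrite !mulf_eq0 invr_eq0 (gt_eqF aa_gt0) orbF pnatr_eq0 => /eqP.
Qed.

Lemma avgP_perp H u : u \in <<S>>%VS -> dotp (avgP S H) u = 0.
Proof. by apply: dotp_span_eq0 => a; apply: avgP_orth. Qed.

Lemma avgP_weyl H M : in_weyl S M -> avgP S H *m M = avgP S H.
Proof.
case/in_weylP=> l lS ->; rewrite mul_reflprod reflseq_id // => a.
exact: avgP_orth.
Qed.

End WeylGroup.

Section RootSystem.
Variables (R : realType) (d m : nat).
Local Notation V := 'rV[R]_d.
Implicit Types a b u v H : V.
Variables (Psi : seq V) (gam : 'I_m.+1 -> V).
Hypothesis Psi_root : root_system Psi.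
Hypothesis gam_base : base_of Psi gam.

Lemma root_neq0 a : a \in Psi -> a != 0.
Proof. by case: Psi_root => _ Psi0 _ _ _ aPsi; apply: contraNneq Psi0 => <-. Qed.

Lemma root_opp a : a \in Psi -> - a \in Psi.
Proof.
move=> aPsi; have aa_nz : dotp a a != 0 by rewrite gt_eqF ?dotpp_gt0 ?root_neq0.
case: Psi_root => _ _ Psi_refl _ _; have := Psi_refl _ _ aPsi aPsi.
suff -> : refl a a = - a by [].
by rewrite /refl mulfK //; apply/rowP => i; rewrite !mxE; ring.
Qed.

(* The Cartan integers of a and b are positive with product at most 4 by
   Cauchy-Schwarz, so one of them is 1 (giving a - b or b - a as a reflected
   root) or both are 2 (forcing a = b). *)
Lemma root_subr a b :
  a \in Psi -> b \in Psi -> a != b -> 0 < dotp a b -> a - b \in Psi.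
Proof.
move=> aPsi bPsi ab ab_gt0; case: Psi_root => _ _ Psi_refl Psi_int _.
have aa_gt0 := dotpp_gt0 (root_neq0 aPsi); have bb_gt0 := dotpp_gt0 (root_neq0 bPsi).
have [z1 Ez1] := Psi_int _ _ aPsi bPsi; have [z2 Ez2] := Psi_int _ _ bPsi aPsi.
rewrite dotpC in Ez1.
have z1_gt0 : (0 < z1)%R by rewrite -(ltr0z R) -Ez1 !mulr_gt0 ?invr_gt0.
have z2_gt0 : (0 < z2)%R by rewrite -(ltr0z R) -Ez2 !mulr_gt0 ?invr_gt0.
have z12_le4 : (z1 * z2 <= 4)%R.
  rewrite -(ler_int R) intrM -Ez1 -Ez2.
  have -> : 2 * dotp a b / dotp a a * (2 * dotp a b / dotp b b) =
            4 * (dotp a b ^+ 2 / (dotp a a * dotp b b)).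
    by field; rewrite !gt_eqF.
  by rewrite ger_pMr ?ler_pdivrMr ?mul1r ?dotp_CauchySchwarz ?mulr_gt0.
have : (z1 = 1 \/ z2 = 1 \/ z1 = 2 /\ z2 = 2)%R by lia.
case=> [z1E | [z2E | [z1E z2E]]].
- have := Psi_refl _ _ aPsi bPsi; rewrite /refl (dotpC b a) Ez1 z1E scale1r.
  by move/root_opp; rewrite opprB.
- by have := Psi_refl _ _ bPsi aPsi; rewrite /refl Ez2 z2E scale1r.
- have ab_aa : 2 * dotp a b = (2 : int)%:~R * dotp a a by rewrite -z1E -Ez1 divfK ?gt_eqF.
  have ab_bb : 2 * dotp a b = (2 : int)%:~R * dotp b b by rewrite -z2E -Ez2 divfK ?gt_eqF.
  have /dotpp_eq0/eqP : dotp (a - b) (a - b) = 0.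
    by rewrite !dotpBl !dotpBr (dotpC b a); lra.
  by rewrite subr_eq0 (negbTE ab).
Qed.

Lemma base_mem i : gam i \in Psi.
Proof. by case: gam_base. Qed.

Lemma base_coef_inj (c1 c2 : 'I_m.+1 -> R) :
  \sum_i c1 i *: gam i = \sum_i c2 i *: gam i -> forall i, c1 i = c2 i.
Proof.
case: gam_base => _ base_free _ eq_c i; apply/eqP; rewrite -subr_eq0; apply/eqP.
apply: (base_free (fun k => c1 k - c2 k)).
by under eq_bigr do rewrite scalerBl; rewrite sumrB eq_c subrr.
Qed.

Lemma base_delta i : gam i = \sum_k (k == i)%:R *: gam k.
Proof.
rewrite (bigD1 i) //= eqxx scale1r big1 ?addr0 // => k /negbTE->.
by rewrite scale0r.
Qed.

Lemma base_inj : injective gam.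
Proof.
move=> i j gij; apply/eqP.
have := @base_coef_inj (fun k => (k == i)%:R) (fun k => (k == j)%:R).
rewrite -!base_delta gij => /(_ erefl i) /eqP; rewrite eqxx.
by case: (i == j) => //; rewrite oner_eq0.
Qed.

Lemma base_subr_notin i j : i != j -> gam i - gam j \notin Psi.
Proof.
move=> ij; apply/negP; case: gam_base => _ _ /[apply] -[c [Ec c_sign]].
have c_delta : forall k, (c k)%:~R = (k == i)%:R - (k == j)%:R :> R.
  apply: (@base_coef_inj (fun k => (c k)%:~R) (fun k => (k == i)%:R - (k == j)%:R)); rewrite -Ec {1}(base_delta i) (base_delta j) -sumrB.
  by apply: eq_bigr => l _; rewrite scalerBl.
have := c_delta i; have := c_delta j; rewrite !eqxx (negbTE ij) eq_sym (negbTE ij).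
rewrite subr0 sub0r => cj ci.
case: c_sign => [/(_ j)|/(_ i)]; first by rewrite -(ler0z R) cj oppr_ge0 ler10.
by rewrite -(ler_int R) ci ler10.
Qed.

Lemma base_obtuse i j : i != j -> dotp (gam i) (gam j) <= 0.
Proof.
move=> ij; rewrite leNgt; apply/negP => gij_gt0.
have := base_subr_notin ij; rewrite root_subr ?base_mem //.
by apply: contraNneq ij => /base_inj->.
Qed.

Lemma base_orth_eq0 v : v \in <<Psi>>%VS -> (forall i, dotp v (gam i) = 0) -> v = 0.
Proof.
move=> vPsi v_orth; apply: dotpp_eq0; apply: dotp_span_eq0 vPsi => b bPsi.
case: gam_base => _ _ /(_ b bPsi) [c [-> _]].
by rewrite dotp_sumr big1 // => i _; rewrite dotpZr v_orth mulr0.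
Qed.

Local Notation Psi1 := (subroots Psi gam).

Lemma mem_subroots b : b \in Psi1 ->
  b \in Psi /\ exists c : 'I_m.+1 -> int, c ord0 = 0 /\ b = \sum_i (c i)%:~R *: gam i.
Proof. by rewrite mem_filter => /andP[/asboolP]. Qed.

Lemma subroots_sub : {subset Psi1 <= Psi}.
Proof. by move=> b /mem_subroots[]. Qed.

Lemma subroots_neq0 a : a \in Psi1 -> a != 0.
Proof. by move/subroots_sub; apply: root_neq0. Qed.

Lemma subroots_refl a b : a \in Psi1 -> b \in Psi1 -> refl a b \in Psi1.
Proof.
case/mem_subroots=> aPsi [ca [ca0 Ea]] /mem_subroots[bPsi [cb [cb0 Eb]]].
case: Psi_root => _ _ Psi_refl Psi_int _.
rewrite mem_filter Psi_refl // andbT; apply/asboolP.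
have [z Ez] := Psi_int _ _ aPsi bPsi.
exists (fun k => cb k - z * ca k); split; first by rewrite ca0 cb0 mulr0 subrr.
rewrite /refl Ez {1}Eb Ea scaler_sumr -sumrB; apply: eq_bigr => k _.
by rewrite intrB intrM scalerBl scalerA.
Qed.

Lemma base_mem_subroots i : i != ord0 -> gam i \in Psi1.
Proof.
move=> i0; rewrite mem_filter base_mem andbT; apply/asboolP.
exists (fun k => (k == i)%:Z); split; first by rewrite eq_sym (negbTE i0).
by rewrite {1}(base_delta i); apply: eq_bigr => k _; case: (k == i).
Qed.


Definition gram : 'M[R]_m.+1 := \matrix_(i, j) dotp (gam i) (gam j).

Lemma gram_unit : gram \in unitmx.
Proof.
have gram_inj (x : 'rV[R]_m.+1) : x *m gram = 0 -> x = 0.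
  move=> x_gram; pose v := \sum_i x 0 i *: gam i.
  have v_orth j : dotp v (gam j) = 0.
    have : (x *m gram) 0 j = 0 by rewrite x_gram mxE.
    rewrite mxE => <-; rewrite dotp_suml; apply: eq_bigr => i _.
    by rewrite dotpZl mxE.
  have v0 : v = 0.
    by apply: dotpp_eq0; rewrite {1}/v dotp_suml big1 // => i _; rewrite dotpZl dotpC v_orth mulr0.
  case: gam_base => _ base_free _.
  by apply/rowP => i; rewrite mxE; apply: (base_free (fun i => x 0 i) v0).
rewrite -row_free_unit -kermx_eq0; apply/eqP/row_matrixP => k.
by rewrite row0; apply: gram_inj; rewrite -row_mul mulmx_ker row0.
Qed.

Definition fweight i := \sum_j invmx gram i j *: gam j.

Lemma fweight_dotp_base i k : dotp (fweight i) (gam k) = (i == k)%:R.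
Proof.
have : (invmx gram *m gram) i k = (i == k)%:R by rewrite mulVmx ?gram_unit ?mxE.
rewrite mxE => <-.
by rewrite /fweight dotp_suml; apply: eq_bigr => j _; rewrite dotpZl mxE.
Qed.

Lemma fweight_span i : fweight i \in <<Psi>>%VS.
Proof. by rewrite memv_suml // => j _; rewrite memvZ // memv_span ?base_mem. Qed.

Lemma span_fweight_decomp H :
  H \in <<Psi>>%VS -> H = \sum_i dotp H (gam i) *: fweight i.
Proof.
move=> HPsi; apply/eqP; rewrite -subr_eq0; apply/eqP/base_orth_eq0 => [|k].
  by rewrite memvB // memv_suml // => i _; rewrite memvZ // fweight_span.
rewrite dotpBl dotp_suml.
under eq_bigr do rewrite dotpZl fweight_dotp_base.
by rewrite sumr_mul_delta subrr.
Qed.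

(* Split x into positive and negative parts with disjoint supports; since the
   simple roots are pairwise obtuse, the negative part v_n of the combination
   satisfies |v_n|^2 <= 0. *)
Lemma base_coef_ge0 (x : 'I_m.+1 -> R) :
  (forall k, 0 <= dotp (\sum_l x l *: gam l) (gam k)) -> forall k, 0 <= x k.
Proof.
move=> x_dotp_ge0.
pose n k := if x k < 0 then - x k else 0.
pose p k := if x k < 0 then 0 else x k.
have x_pn k : x k = p k - n k.
  by rewrite /p /n; case: ifP => _; rewrite ?sub0r ?opprK ?subr0.
have n_ge0 k : 0 <= n k by rewrite /n; case: ifP => // /ltW; rewrite oppr_ge0.
have p_ge0 k : 0 <= p k by rewrite /p; case: ifP => // /negbT; rewrite -leNgt.
have np0 k : n k * p k = 0 by rewrite /n /p; case: ifP; rewrite ?mulr0 ?mul0r.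
pose vn := \sum_l n l *: gam l.
have vn_dotp k : dotp vn (gam k) =
    \sum_l p l * dotp (gam l) (gam k) - dotp (\sum_l x l *: gam l) (gam k).
  rewrite /vn !dotp_suml -sumrB; apply: eq_bigr => l _.
  by rewrite !dotpZl x_pn; ring.
have vn_le0 : dotp vn vn <= 0.
  rewrite {1}/vn dotp_suml; apply: sumr_le0 => k _.
  rewrite dotpZl dotpC vn_dotp mulrBr subr_le0 (@le_trans _ _ 0) ?mulr_ge0 //.
  rewrite mulr_sumr; apply: sumr_le0 => l _; rewrite mulrA.
  have [->|lk] := eqVneq l k; first by rewrite np0 mul0r.
  by rewrite mulr_ge0_le0 ?mulr_ge0 ?base_obtuse.
have vn0 : vn = 0 by apply/dotpp_eq0/le_anti; rewrite vn_le0 dotpp_ge0.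
case: gam_base => _ base_free _ k.
by rewrite x_pn (base_free n vn0 k) subr0.
Qed.

Lemma fweight_dotp_ge0 i j : 0 <= dotp (fweight i) (fweight j).
Proof.
have -> : dotp (fweight i) (fweight j) = invmx gram j i.
  rewrite {2}/fweight dotp_sumr -[RHS](sumr_mul_delta _ i).
  by apply: eq_bigr => k _; rewrite dotpZr fweight_dotp_base eq_sym.
apply: (base_coef_ge0 (x := invmx gram j)) => k.
by rewrite -/(fweight j) fweight_dotp_base ler0n.
Qed.

Lemma fweight0_perp u : u \in <<Psi1>>%VS -> dotp (fweight ord0) u = 0.
Proof.
apply: dotp_span_eq0 => b /mem_subroots[_ [c [c0 ->]]].
rewrite dotp_sumr (eq_bigr (fun i => (c i)%:~R * (i == ord0)%:R)).
  by rewrite sumr_mul_delta c0.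
by move=> i _; rewrite dotpZr fweight_dotp_base eq_sym.
Qed.

Local Notation P := (avgP Psi1).

Lemma proj_subr_span H : H - P H \in <<Psi1>>%VS.
Proof. exact: avgP_subr_span subroots_neq0 subroots_refl H. Qed.

Lemma proj_perp H u : u \in <<Psi1>>%VS -> dotp (P H) u = 0.
Proof. exact: avgP_perp subroots_neq0 subroots_refl H u. Qed.

Lemma span_subroots_sub : (<<Psi1>> <= <<Psi>>)%VS.
Proof. exact/sub_span/subroots_sub. Qed.

Lemma proj_span H : H \in <<Psi>>%VS -> P H \in <<Psi>>%VS.
Proof.
move=> HPsi; have -> : P H = H - (H - P H) by rewrite opprB addrC subrK.
by rewrite memvB // (subvP span_subroots_sub) ?proj_subr_span.
Qed.

Local Notation om := fweight.
Local Notation c0 H := (dotp H (gam ord0)).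

Lemma dotpp_le_coord0 H : H \in <<Psi>>%VS ->
    (forall i, 0 <= dotp H (gam i) <= c0 H) ->
  dotp H H <= c0 H ^+ 2 * \sum_i \sum_j dotp (om i) (om j).
Proof.
move=> HPsi H_coord; rewrite {1 2}(span_fweight_decomp HPsi) dotp_suml mulr_sumr.
apply: ler_sum => i _; rewrite dotpZl dotp_sumr !mulr_sumr; apply: ler_sum => j _.
rewrite dotpZr mulrA ler_wpM2r ?fweight_dotp_ge0 // expr2.
by have /andP[? ?] := H_coord i; have /andP[? ?] := H_coord j; rewrite ler_pM.
Qed.

Lemma coord0_le_dotp_fweight0 H : H \in <<Psi>>%VS ->
    (forall i, 0 <= dotp H (gam i)) ->
  c0 H * dotp (om ord0) (om ord0) <= dotp H (om ord0).
Proof.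
move=> HPsi H_coord.
have -> : dotp H (om ord0) = \sum_i dotp H (gam i) * dotp (om i) (om ord0).
  by rewrite {1}(span_fweight_decomp HPsi) dotp_suml; under eq_bigr do rewrite dotpZl.
rewrite (bigD1 ord0) //= lerDl; apply: sumr_ge0 => i _.
by rewrite mulr_ge0 ?fweight_dotp_ge0.
Qed.

Lemma fweight_neq0 i : om i != 0.
Proof.
apply/eqP => om0; have := fweight_dotp_base i i.
by rewrite om0 dotp0l eqxx => /eqP; rewrite eq_sym oner_eq0.
Qed.

Lemma proj_dotpp_ge H : H \in <<Psi>>%VS -> (forall i, 0 <= dotp H (gam i)) ->
  c0 H ^+ 2 * dotp (om ord0) (om ord0) <= dotp (P H) (P H).
Proof.
move=> HPsi H_coord; set w := dotp (om ord0) (om ord0).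
have w_gt0 : 0 < w := dotpp_gt0 (fweight_neq0 ord0).
have PH_om : dotp (P H) (om ord0) = dotp H (om ord0).
  apply/eqP; rewrite -subr_eq0 -dotpBl dotpC fweight0_perp //.
  by rewrite -opprB memvN proj_subr_span.
have CS := dotp_CauchySchwarz (P H) (om ord0); rewrite PH_om -/w in CS.
have lower := coord0_le_dotp_fweight0 HPsi H_coord; rewrite -/w in lower.
have sq_le : (c0 H * w) ^+ 2 <= dotp H (om ord0) ^+ 2.
  by rewrite !expr2 ler_pM // mulr_ge0 ?(ltW w_gt0).
by have := le_trans sq_le CS; rewrite exprMn [w ^+ 2]expr2 mulrA ler_pM2r.
Qed.

Lemma proj_norm_bounds : exists a b : R, [/\ 0 < a, 0 < b &
  forall H, H \in <<Psi>>%VS -> (forall i, 0 < dotp H (gam i)) ->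
    (forall j, dotp (gam j) H <= dotp (gam ord0) H) ->
    a * vnorm H <= vnorm (P H) /\ vnorm (H - P H) <= b * vnorm (P H)].
Proof.
set w := dotp (om ord0) (om ord0); set T := \sum_i \sum_j dotp (om i) (om j).
have w_gt0 : 0 < w := dotpp_gt0 (fweight_neq0 ord0).
have w_le_T : w <= T.
  rewrite /T (bigD1 ord0) //= (bigD1 ord0) //= -addrA lerDl.
  apply: addr_ge0; apply: sumr_ge0 => i _; last apply: sumr_ge0 => j _;
    exact: fweight_dotp_ge0.
have T_gt0 : 0 < T := lt_le_trans w_gt0 w_le_T.
exists (Num.sqrt (w / T)), (Num.sqrt (T / w)); split; rewrite ?sqrtr_gt0 ?divr_gt0 //.
move=> H HPsi H_gt0 H_max.
have H_coord i : 0 <= dotp H (gam i) <= c0 H.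
  by rewrite (ltW (H_gt0 i)) /= dotpC [c0 H]dotpC H_max.
have HH := dotpp_le_coord0 HPsi H_coord; rewrite -/T in HH.
have PP := proj_dotpp_ge HPsi (fun i => ltW (H_gt0 i)); rewrite -/w in PP.
split.
- apply: sqrt_mul_vnorm_le; first by rewrite divr_ge0 ?ltW.
  apply: le_trans (ler_wpM2l _ HH) (le_trans _ PP); first by rewrite divr_ge0 ?ltW.
  by rewrite mulrCA divfK ?gt_eqF.
- apply: vnorm_le_sqrt_mul; first by rewrite divr_ge0 ?ltW.
  rewrite dotpp_subr_orth; last by rewrite proj_perp ?proj_subr_span.
  apply: le_trans (_ : _ <= dotp H H) _; first by rewrite lerBlDr lerDl dotpp_ge0.
  apply: le_trans HH (le_trans _ (ler_wpM2l _ PP)); last by rewrite divr_ge0 ?ltW.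
  by rewrite mulrCA divfK ?gt_eqF.
Qed.

End RootSystem.

Theorem lemma1 (R : realType) (d m : nat) (Psi : seq 'rV[R]_d)
    (gam : 'I_m.+1 -> 'rV[R]_d)
    (HPsi : root_system Psi) (Hbase : base_of Psi gam) :
  let Psi1 := subroots Psi gam in
  let P := avgP Psi1 in
  let spanPsi := fun H : 'rV[R]_d => H \in <<Psi>>%VS in
  let spanPsi1 := fun H : 'rV[R]_d => H \in <<Psi1>>%VS in
  let perpPsi1 := fun H : 'rV[R]_d =>
        spanPsi H /\ forall u, spanPsi1 u -> dotp H u = 0 in
  let splus := fun H : 'rV[R]_d => spanPsi H /\ forall i, 0 < dotp H (gam i) in
  let cplus := fun H : 'rV[R]_d =>
        spanPsi1 H /\ forall i : 'I_m.+1, i != ord0 -> 0 < dotp H (gam i) in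
  let R1 := fun H : 'rV[R]_d =>
        [/\ splus H, 1 <= vnorm H & forall j, dotp (gam j) H <= dotp (gam ord0) H] in
  [/\ (* (i) *)
      (forall sigma H, in_weyl Psi1 sigma -> spanPsi H -> P H *m sigma = P H),
      (* (ii) *)
      orth_proj spanPsi perpPsi1 P /\ orth_proj spanPsi spanPsi1 (fun H => H - P H),
      (* (iii) *)
      (forall H, splus H -> cplus (H - P H))
    & (* (iv) *)
      exists a b : R, [/\ 0 < a, 0 < b &
        forall H, R1 H -> a * vnorm H <= vnorm (P H) /\
                          vnorm (H - P H) <= b * vnorm (P H)]].
Proof.
move=> Psi1 P spanPsi spanPsi1 perpPsi1 splus cplus R1.
have P_subr := proj_subr_span gam HPsi; have P_perp := proj_perp (gam := gam) HPsi.
have Psi1_neq0 : forall a, a \in Psi1 -> a != 0 by apply: subroots_neq0.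
have Psi1_refl : forall a b, a \in Psi1 -> b \in Psi1 -> refl a b \in Psi1.
  by apply: subroots_refl.
split.
- by move=> sigma H /(avgP_weyl Psi1_neq0 Psi1_refl H).
- split=> H HPsi_H; split.
  + by split=> [|u]; [apply: (proj_span gam HPsi) | apply: P_perp].
  + by move=> w [_ w_perp]; rewrite dotpC (w_perp _ (P_subr H)).
  + exact: P_subr.
  + by move=> w w_Psi1; rewrite opprB addrC subrK P_perp.
- move=> H [HPsi_H H_gt0]; split=> [|i i0]; first exact: P_subr.
  by rewrite dotpBl P_perp ?subr0 ?H_gt0 // memv_span ?(base_mem_subroots Hbase).
have [a [b [a_gt0 b_gt0 bounds]]] := proj_norm_bounds HPsi Hbase.
by exists a, b; split=> // H [[HPsi_H H_gt0] _ H_max]; apply: bounds.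
Qed.
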